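(* Let $\eta>0$, $G=(-\eta,1+\eta)\times\mathbb{R}^{n-1}$, and let $\Xi:\mathbb{R}\times\mathbb{R}\times C^2([0,1],\mathbb{R}^{n-1})\to C^2([0,1],\mathbb{R}^n)$ be $\Xi(a,b,u)(t)=((1-t)a+tb,\,u(t))$. Let $p:\Omega([0,1],G)\to\hat{\Omega}([0,1],G)$ be the quotient projection. Then there exist $\delta\in(0,\eta)$ and an open neighborhood $W_5$ of $(0,1,0)$ in $(-\delta,\delta)\times(1-\delta,1+\delta)\times C^2([0,1],\mathbb{R}^{n-1})$ such that $\Xi(W_5)\subseteq\Omega([0,1],G)$, the set $\hat W_5=p\circ\Xi(W_5)$ is open in $\hat{\Omega}([0,1],G)$, and $p\circ\Xi:W_5\to\hat W_5$ is a homeomorphism.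
   Context: $\Omega([0,1],G)$ is the space of $C^2$ immersions $[0,1]\to G$ with the $C^2$ topology. $\mathrm{Diff}_2([0,1])$ is the set of $C^2$ diffeomorphisms $\tau$ of $[0,1]$ with $\tau(0)=0$, $\tau(1)=1$; $f\sim g$ iff $f=g\circ\tau$ for some $\tau\in\mathrm{Diff}_2([0,1])$, and $\hat{\Omega}([0,1],G)=\Omega([0,1],G)/\sim$ with the quotient topology. $\mathbb{R}\times\mathbb{R}\times C^2([0,1],\mathbb{R}^{n-1})$ carries the norm $|a|+|b|+\|u\|_{C^2}$. *)

(* concrete reals R.  Maps [0,1] -> R^k are represented as
   f : R -> nat -> R; only the values at t in [0,1] and coordinates i < k
   matter (all notions below only inspect those). *)
From Stdlib Require Import Reals.
Open Scope R_scope.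

Definition I01 (t : R) : Prop := 0 <= t <= 1.

Definition has_deriv01 (f f1 : R -> R) : Prop :=
  forall t, I01 t -> forall eps, 0 < eps -> exists del, 0 < del /\
    forall s, I01 s -> s <> t -> Rabs (s - t) < del ->
      Rabs ((f s - f t) / (s - t) - f1 t) < eps.

Definition cont01 (f : R -> R) : Prop :=
  forall t, I01 t -> forall eps, 0 < eps -> exists del, 0 < del /\
    forall s, I01 s -> Rabs (s - t) < del -> Rabs (f s - f t) < eps.

Definition C2data (f f1 f2 : R -> R) : Prop :=
  has_deriv01 f f1 /\ has_deriv01 f1 f2 /\ cont01 f2.

Definition isC2 (f : R -> R) : Prop := exists f1 f2, C2data f f1 f2.

Definition C2vdata (k : nat) (f f1 f2 : R -> nat -> R) : Prop :=
  forall i, (i < k)%nat -> C2data (fun t => f t i) (fun t => f1 t i) (fun t => f2 t i).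

Definition isC2v (k : nat) (f : R -> nat -> R) : Prop :=
  exists f1 f2, C2vdata k f f1 f2.

(* g lies in the C^2-ball of radius r around f (sup over t in [0,1],
   coordinates and derivatives of order <= 2; generates the C^2 topology) *)
Definition c2near (k : nat) (f g : R -> nat -> R) (r : R) : Prop :=
  exists f1 f2 g1 g2, C2vdata k f f1 f2 /\ C2vdata k g g1 g2 /\
    forall t i, I01 t -> (i < k)%nat ->
      Rabs (f t i - g t i) < r /\ Rabs (f1 t i - g1 t i) < r /\
      Rabs (f2 t i - g2 t i) < r.

(* G = (-eta, 1+eta) x R^m  inside R^(m+1) (coordinate 0 is the first) *)
Definition inG (eta : R) (x : nat -> R) : Prop := - eta < x 0%nat < 1 + eta.

Definition Omega (m : nat) (eta : R) (f : R -> nat -> R) : Prop :=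
  (forall t, I01 t -> inG eta (f t)) /\
  exists f1 f2, C2vdata (S m) f f1 f2 /\
    forall t, I01 t -> exists i, (i < S m)%nat /\ f1 t i <> 0.

Definition Diff2 (tau : R -> R) : Prop :=
  isC2 tau /\ tau 0 = 0 /\ tau 1 = 1 /\ (forall t, I01 t -> I01 (tau t)) /\
  exists sigma, isC2 sigma /\ (forall t, I01 t -> I01 (sigma t)) /\
    (forall t, I01 t -> sigma (tau t) = t /\ tau (sigma t) = t).

Definition reparam (m : nat) (f g : R -> nat -> R) : Prop :=
  exists tau, Diff2 tau /\ forall t i, I01 t -> (i < S m)%nat -> f t i = g (tau t) i.

Definition OmegaOpen (m : nat) (eta : R) (Sset : (R -> nat -> R) -> Prop) : Prop :=
  (forall f, Sset f -> Omega m eta f) /\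
  forall f, Sset f -> exists r, 0 < r /\
    forall g, Omega m eta g -> c2near (S m) f g r -> Sset g.

(* subsets of Omega saturated for ~ (= preimages p^{-1}(U) of subsets U of the
   quotient); U is open in the quotient topology iff p^{-1}(U) is OmegaOpen *)
Definition saturated (m : nat) (eta : R) (Sset : (R -> nat -> R) -> Prop) : Prop :=
  forall f g, Sset f -> Omega m eta g -> reparam m g f -> Sset g.

Definition X := (R * R * (R -> nat -> R))%type.

Definition Xnear (m : nat) (w w' : X) (r : R) : Prop :=
  let '(a, b, u) := w in let '(a', b', u') := w' in
  Rabs (a - a') < r /\ Rabs (b - b') < r /\ c2near m u u' r.

Definition inX (m : nat) (w : X) : Prop := let '(_, _, u) := w in isC2v m u.

(* equality of elements of X (u only matters on [0,1], coordinates < m) *)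
Definition Xeq (m : nat) (w w' : X) : Prop :=
  let '(a, b, u) := w in let '(a', b', u') := w' in
  a = a' /\ b = b' /\ forall t i, I01 t -> (i < m)%nat -> u t i = u' t i.

Definition XOpen (m : nat) (V : X -> Prop) : Prop :=
  (forall w, V w -> inX m w) /\
  forall w, V w -> exists r, 0 < r /\ forall w', inX m w' -> Xnear m w w' r -> V w'.

Definition Xi (w : X) : R -> nat -> R :=
  let '(a, b, u) := w in
  fun t i => match i with O => (1 - t) * a + t * b | S j => u t j end.

(* p^{-1}(p(Xi(V))) : the saturation of Xi(V) in Omega *)
Definition satImage (m : nat) (eta : R) (V : X -> Prop) (f : R -> nat -> R) : Prop :=
  Omega m eta f /\ exists w, V w /\ reparam m f (Xi w).

(* A curve f in Omega close to Xi(W5) has a first coordinate with positive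
   derivative, so tau(t) = (f(t)_0 - f(0)_0) / (f(1)_0 - f(0)_0) is a C^2
   diffeomorphism of [0,1] and f = Xi(f(0)_0, f(1)_0, u) o tau with
   u = (f_1, ..., f_m) o tau^-1.  This normal form inverts p o Xi: it is
   injective because a reparametrisation preserving a non-constant affine
   coordinate is the identity, and p o Xi is continuous because Xi is
   Lipschitz.  Openness amounts to the continuity of the normal form in the
   C^2 topology: when f varies, tau^-1 and its derivatives 1 / tau' o tau^-1
   and - tau'' / tau'^3 o tau^-1 vary uniformly on [0,1], because tau is
   uniformly expanding. *)

From Stdlib Require Import Reals Lra Lia Psatz ClassicalEpsilon.
Open Scope R_scope.

(** * Limits along a nested family *)

(* [C d] plays the role of a neighbourhood of radius [d]; the target [L] may
   depend on the point, so that uniform convergence is a special case. *)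
Definition nested {A : Type} (C : R -> A -> Prop) : Prop :=
  forall d d' x, 0 < d -> d <= d' -> C d x -> C d' x.

Definition lim_along {A : Type} (C : R -> A -> Prop) (F L : A -> R) : Prop :=
  forall e, 0 < e -> exists d, 0 < d /\ forall x, C d x -> Rabs (F x - L x) < e.

Lemma nested_Rmin {A : Type} (C : R -> A -> Prop) d1 d2 x :
  nested C -> 0 < d1 -> 0 < d2 -> C (Rmin d1 d2) x -> C d1 x /\ C d2 x.
Proof.
  intros Hm h1 h2 H. assert (h : 0 < Rmin d1 d2) by (apply Rmin_glb_lt; auto).
  split; eapply Hm; eauto; [apply Rmin_l | apply Rmin_r].
Qed.

Lemma lim_along_ext {A : Type} (C : R -> A -> Prop) F G L L' :
  (forall d x, C d x -> F x = G x /\ L x = L' x) -> lim_along C F L -> lim_along C G L'.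
Proof.
  intros E H e he. destruct (H e he) as [d [hd Hd]]. exists d; split; auto.
  intros x hx. destruct (E d x hx) as [<- <-]. auto.
Qed.

Lemma lim_along_const {A : Type} (C : R -> A -> Prop) L : lim_along C L L.
Proof.
  intros e he; exists 1; split; [lra|]. intros; rewrite Rminus_diag, Rabs_R0; auto.
Qed.

Lemma lim_along_plus {A : Type} (C : R -> A -> Prop) F1 F2 L1 L2 :
  nested C -> lim_along C F1 L1 -> lim_along C F2 L2 ->
  lim_along C (fun x => F1 x + F2 x) (fun x => L1 x + L2 x).
Proof.
  intros Hm H1 H2 e he.
  destruct (H1 (e / 2)) as [d1 [hd1 Hd1]]; [lra|].
  destruct (H2 (e / 2)) as [d2 [hd2 Hd2]]; [lra|].
  exists (Rmin d1 d2); split; [apply Rmin_glb_lt; auto|].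
  intros x hx. destruct (nested_Rmin C d1 d2 x Hm hd1 hd2 hx) as [x1 x2].
  specialize (Hd1 x x1). specialize (Hd2 x x2).
  replace (F1 x + F2 x - (L1 x + L2 x)) with ((F1 x - L1 x) + (F2 x - L2 x)) by ring.
  eapply Rle_lt_trans; [apply Rabs_triang|]. lra.
Qed.

Lemma lim_along_scal {A : Type} (C : R -> A -> Prop) F L k :
  lim_along C F L -> lim_along C (fun x => k * F x) (fun x => k * L x).
Proof.
  intros H e he. pose proof (Rabs_pos k).
  destruct (H (e / (Rabs k + 1))) as [d [hd Hd]]; [apply Rdiv_lt_0_compat; lra|].
  exists d; split; auto. intros x hx. specialize (Hd x hx).
  replace (k * F x - k * L x) with (k * (F x - L x)) by ring. rewrite Rabs_mult.
  apply (Rmult_lt_compat_r (Rabs k + 1)) in Hd; [|lra].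
  replace (e / (Rabs k + 1) * (Rabs k + 1)) with e in Hd by (field; lra).
  pose proof (Rabs_pos (F x - L x)). nra.
Qed.

Lemma Rabs_mult_sub_lt x y a b M1 M2 e :
  Rabs a <= M1 -> Rabs b <= M2 -> 0 < e ->
  Rabs (x - a) < e / (2 * (Rabs M2 + 1)) ->
  Rabs (y - b) < Rmin 1 (e / (2 * (Rabs M1 + 1))) ->
  Rabs (x * y - a * b) < e.
Proof.
  intros ha hb he hx hy.
  assert (hy1 := Rlt_le_trans _ _ _ hy (Rmin_l _ _)).
  assert (hy2 := Rlt_le_trans _ _ _ hy (Rmin_r _ _)).
  pose proof (Rle_abs M1); pose proof (Rle_abs M2); pose proof (Rabs_pos M1).
  pose proof (Rabs_pos M2); pose proof (Rabs_pos (x - a)); pose proof (Rabs_pos (y - b)).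
  assert (Ey : Rabs y <= Rabs M2 + 1).
  { replace y with ((y - b) + b) by ring. pose proof (Rabs_triang (y - b) b). lra. }
  assert (E1 : Rabs (x - a) * (Rabs M2 + 1) < e / 2).
  { apply (Rmult_lt_compat_r (Rabs M2 + 1)) in hx; [|lra].
    replace (e / (2 * (Rabs M2 + 1)) * (Rabs M2 + 1)) with (e / 2) in hx by (field; lra).
    exact hx. }
  assert (E2 : Rabs y * Rabs (x - a) <= (Rabs M2 + 1) * Rabs (x - a)) by nra.
  assert (E3 : (Rabs M1 + 1) * Rabs (y - b) < e / 2).
  { apply (Rmult_lt_compat_l (Rabs M1 + 1)) in hy2; [|lra].
    replace ((Rabs M1 + 1) * (e / (2 * (Rabs M1 + 1)))) with (e / 2) in hy2 by (field; lra).
    exact hy2. }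
  assert (E4 : Rabs a * Rabs (y - b) <= (Rabs M1 + 1) * Rabs (y - b)) by nra.
  replace (x * y - a * b) with ((x - a) * y + a * (y - b)) by ring.
  eapply Rle_lt_trans; [apply Rabs_triang|]. rewrite !Rabs_mult. lra.
Qed.

Lemma lim_along_mult {A : Type} (C : R -> A -> Prop) F1 F2 L1 L2 M1 M2 :
  nested C -> (forall x, C 1 x -> Rabs (L1 x) <= M1 /\ Rabs (L2 x) <= M2) ->
  lim_along C F1 L1 -> lim_along C F2 L2 ->
  lim_along C (fun x => F1 x * F2 x) (fun x => L1 x * L2 x).
Proof.
  intros Hm HB H1 H2 e he. pose proof (Rabs_pos M1); pose proof (Rabs_pos M2).
  destruct (H1 (e / (2 * (Rabs M2 + 1)))) as [d1 [hd1 Hd1]];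
    [apply Rdiv_lt_0_compat; lra|].
  destruct (H2 (Rmin 1 (e / (2 * (Rabs M1 + 1))))) as [d2 [hd2 Hd2]].
  { apply Rmin_glb_lt; [lra|]. apply Rdiv_lt_0_compat; lra. }
  exists (Rmin 1 (Rmin d1 d2)); split; [repeat apply Rmin_glb_lt; lra|].
  intros x hx.
  assert (hd12 : 0 < Rmin d1 d2) by (apply Rmin_glb_lt; auto).
  destruct (nested_Rmin C 1 _ x Hm ltac:(lra) hd12 hx) as [x0 x12].
  destruct (nested_Rmin C _ _ x Hm hd1 hd2 x12) as [x1 x2].
  destruct (HB x x0).
  apply (Rabs_mult_sub_lt _ _ _ _ M1 M2); auto.
Qed.

Lemma Rabs_inv_sub_lt x a c e :
  0 < c -> c <= Rabs a -> 0 < e -> Rabs (x - a) < Rmin (c / 2) (e * c * c / 2) ->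
  Rabs (/ x - / a) < e.
Proof.
  intros hc ha he hx.
  assert (h1 := Rlt_le_trans _ _ _ hx (Rmin_l _ _)).
  assert (h2 := Rlt_le_trans _ _ _ hx (Rmin_r _ _)).
  assert (hxa : c / 2 <= Rabs x).
  { pose proof (Rabs_triang_inv a x). rewrite Rabs_minus_sym in h1. lra. }
  assert (a <> 0) by (intro; subst; rewrite Rabs_R0 in ha; lra).
  assert (x <> 0) by (intro; subst; rewrite Rabs_R0 in hxa; lra).
  replace (/ x - / a) with ((a - x) / (x * a)) by (field; auto).
  unfold Rdiv. rewrite Rabs_mult, Rabs_inv, Rabs_mult, Rabs_minus_sym.
  assert (0 < Rabs x * Rabs a) by nra.
  apply (Rmult_lt_reg_r (Rabs x * Rabs a)); auto.
  rewrite Rmult_assoc, Rinv_l, Rmult_1_r by lra.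
  assert (c / 2 * c <= Rabs x * Rabs a) by nra.
  nra.
Qed.

Lemma lim_along_inv {A : Type} (C : R -> A -> Prop) F L c :
  nested C -> 0 < c -> (forall x, C 1 x -> c <= Rabs (L x)) ->
  lim_along C F L -> lim_along C (fun x => / F x) (fun x => / L x).
Proof.
  intros Hm hc HB H e he.
  destruct (H (Rmin (c / 2) (e * c * c / 2))) as [d1 [hd1 Hd1]].
  { apply Rmin_glb_lt; [lra|]. apply Rdiv_lt_0_compat; [|lra].
    repeat apply Rmult_lt_0_compat; lra. }
  exists (Rmin 1 d1); split; [apply Rmin_glb_lt; lra|].
  intros x hx. destruct (nested_Rmin C 1 d1 x Hm ltac:(lra) hd1 hx) as [x0 x1].
  apply (Rabs_inv_sub_lt _ _ c); auto.
Qed.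

Lemma lim_along_mult_cst {A : Type} (C : R -> A -> Prop) F1 F2 l1 l2 :
  nested C -> lim_along C F1 (fun _ => l1) -> lim_along C F2 (fun _ => l2) ->
  lim_along C (fun x => F1 x * F2 x) (fun _ => l1 * l2).
Proof.
  intros Hm H1 H2.
  apply (lim_along_mult C F1 F2 (fun _ => l1) (fun _ => l2) (Rabs l1) (Rabs l2)); auto.
  intros; split; lra.
Qed.

Lemma lim_along_inv_cst {A : Type} (C : R -> A -> Prop) F l :
  nested C -> l <> 0 -> lim_along C F (fun _ => l) ->
  lim_along C (fun x => / F x) (fun _ => / l).
Proof.
  intros Hm hl H. apply (lim_along_inv C F (fun _ => l) (Rabs l)); auto.
  - apply Rabs_pos_lt; auto.
  - intros; lra.
Qed.

(** * Continuity and derivatives on [0,1] *)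

Definition near01 (t d s : R) : Prop := I01 s /\ Rabs (s - t) < d.
Definition pnear01 (t d s : R) : Prop := near01 t d s /\ s <> t.
Definition maps01 (s : R -> R) : Prop := forall t, I01 t -> I01 (s t).

Lemma I01_0 : I01 0.
Proof. unfold I01; lra. Qed.

Lemma I01_1 : I01 1.
Proof. unfold I01; lra. Qed.

Lemma nested_near01 t : nested (near01 t).
Proof. intros d d' s _ h [? ?]; split; [auto | lra]. Qed.

Lemma nested_pnear01 t : nested (pnear01 t).
Proof. intros d d' s hd h [? ?]; split; [eapply nested_near01; eauto | auto]. Qed.

Lemma cont01_lim f :
  cont01 f <-> forall t, I01 t -> lim_along (near01 t) f (fun _ => f t).
Proof.
  split; intros H t ht e he; destruct (H t ht e he) as [d [hd Hd]];
    exists d; split; auto.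
  - intros s [? ?]; auto.
  - intros s hs hsd. apply Hd. split; auto.
Qed.

Lemma has_deriv01_lim f f1 :
  has_deriv01 f f1 <-> forall t, I01 t ->
    lim_along (pnear01 t) (fun s => (f s - f t) / (s - t)) (fun _ => f1 t).
Proof.
  split; intros H t ht e he; destruct (H t ht e he) as [d [hd Hd]];
    exists d; split; auto.
  - intros s [[? ?] ?]; auto.
  - intros s hs hst hsd. apply Hd. split; [split|]; auto.
Qed.

Lemma lim_near01_pnear01 F L t :
  lim_along (near01 t) F L -> lim_along (pnear01 t) F L.
Proof.
  intros H e he. destruct (H e he) as [d [hd Hd]]. exists d; split; auto.
  intros s [? _]. auto.
Qed.

Lemma lim_pnear01_near01 F t :
  lim_along (pnear01 t) F (fun _ => F t) -> lim_along (near01 t) F (fun _ => F t).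
Proof.
  intros H e he. destruct (H e he) as [d [hd Hd]]. exists d; split; auto.
  intros s hs. destruct (Req_dec s t) as [->|hne].
  - rewrite Rminus_diag, Rabs_R0; auto.
  - apply Hd. split; auto.
Qed.

Lemma lim_along_comp_near01 phi l s t :
  lim_along (near01 (s t)) phi (fun _ => l) -> maps01 s ->
  lim_along (near01 t) s (fun _ => s t) ->
  lim_along (near01 t) (fun u => phi (s u)) (fun _ => l).
Proof.
  intros Hp Hi Hs e he. destruct (Hp e he) as [d1 [hd1 Hd1]].
  destruct (Hs d1 hd1) as [d2 [hd2 Hd2]]. exists d2; split; auto.
  intros u [hu hud]. apply Hd1. split; auto. apply Hd2. split; auto.
Qed.

Lemma has_deriv01_cont f f1 : has_deriv01 f f1 -> cont01 f.
Proof.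
  intros H. apply cont01_lim. intros t ht. apply lim_pnear01_near01.
  assert (Hid : lim_along (pnear01 t) (fun s => s - t) (fun _ => 0)).
  { intros e he. exists e; split; auto. intros s [[_ hs] _]. rewrite Rminus_0_r; auto. }
  assert (G := lim_along_plus _ _ _ _ _ (nested_pnear01 t)
     (lim_along_const (pnear01 t) (fun _ => f t))
     (lim_along_mult_cst _ _ _ _ _ (nested_pnear01 t) (proj1 (has_deriv01_lim f f1) H t ht) Hid)).
  eapply lim_along_ext; [|exact G]. intros d s [_ hne]. split; [field; lra | ring].
Qed.

Lemma cont01_ext f g : cont01 f -> (forall t, I01 t -> f t = g t) -> cont01 g.
Proof.
  intros H E t ht e he. destruct (H t ht e he) as [d [hd Hd]]. exists d; split; auto.
  intros s hs hsd. rewrite <- !E; auto.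
Qed.

Lemma cont01_const c : cont01 (fun _ => c).
Proof.
  intros t ht e he; exists 1; split; [lra|]. intros; rewrite Rminus_diag, Rabs_R0; auto.
Qed.

Lemma cont01_plus f g : cont01 f -> cont01 g -> cont01 (fun t => f t + g t).
Proof.
  rewrite !cont01_lim. intros Hf Hg t ht.
  exact (lim_along_plus _ _ _ _ _ (nested_near01 t) (Hf t ht) (Hg t ht)).
Qed.

Lemma cont01_scal k f : cont01 f -> cont01 (fun t => k * f t).
Proof.
  rewrite !cont01_lim. intros Hf t ht. exact (lim_along_scal _ _ _ k (Hf t ht)).
Qed.

Lemma cont01_mult f g : cont01 f -> cont01 g -> cont01 (fun t => f t * g t).
Proof.
  rewrite !cont01_lim. intros Hf Hg t ht.
  exact (lim_along_mult_cst _ _ _ _ _ (nested_near01 t) (Hf t ht) (Hg t ht)).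
Qed.

Lemma cont01_inv f : cont01 f -> (forall t, I01 t -> f t <> 0) -> cont01 (fun t => / f t).
Proof.
  rewrite !cont01_lim. intros Hf Hn t ht.
  exact (lim_along_inv_cst _ _ _ (nested_near01 t) (Hn t ht) (Hf t ht)).
Qed.

Lemma cont01_comp F s : cont01 F -> cont01 s -> maps01 s -> cont01 (fun t => F (s t)).
Proof.
  intros HF Hs Hi t ht e he.
  destruct (HF (s t) (Hi t ht) e he) as [d1 [hd1 Hd1]].
  destruct (Hs t ht d1 hd1) as [d2 [hd2 Hd2]].
  exists d2; split; auto.
Qed.

Lemma has_deriv01_ext f f1 g g1 : has_deriv01 f f1 ->
  (forall t, I01 t -> f t = g t) -> (forall t, I01 t -> f1 t = g1 t) -> has_deriv01 g g1.
Proof.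
  intros H E E1 t ht e he. destruct (H t ht e he) as [d [hd Hd]]. exists d; split; auto.
  intros s hs hst hsd. rewrite <- !E, <- E1; auto.
Qed.

Lemma has_deriv01_const c : has_deriv01 (fun _ => c) (fun _ => 0).
Proof.
  intros t ht e he; exists 1; split; [lra|]. intros s hs hst hsd.
  unfold Rdiv. rewrite Rminus_diag, Rmult_0_l, Rminus_diag, Rabs_R0; auto.
Qed.

Lemma has_deriv01_id : has_deriv01 (fun t => t) (fun _ => 1).
Proof.
  intros t ht e he; exists 1; split; [lra|]. intros s hs hst hsd.
  replace ((s - t) / (s - t) - 1) with 0 by (field; lra). rewrite Rabs_R0; auto.
Qed.

Lemma has_deriv01_plus f f1 g g1 : has_deriv01 f f1 -> has_deriv01 g g1 ->
  has_deriv01 (fun t => f t + g t) (fun t => f1 t + g1 t).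
Proof.
  rewrite !has_deriv01_lim. intros Hf Hg t ht.
  eapply lim_along_ext;
    [|exact (lim_along_plus _ _ _ _ _ (nested_pnear01 t) (Hf t ht) (Hg t ht))].
  intros d s [_ hne]. split; [field; lra | auto].
Qed.

Lemma has_deriv01_scal k f f1 : has_deriv01 f f1 ->
  has_deriv01 (fun t => k * f t) (fun t => k * f1 t).
Proof.
  rewrite !has_deriv01_lim. intros Hf t ht.
  eapply lim_along_ext; [|exact (lim_along_scal _ _ _ k (Hf t ht))].
  intros d s [_ hne]. split; [field; lra | auto].
Qed.

Lemma has_deriv01_mult f f1 g g1 : has_deriv01 f f1 -> has_deriv01 g g1 ->
  has_deriv01 (fun t => f t * g t) (fun t => f1 t * g t + f t * g1 t).
Proof.
  intros Hf Hg. pose proof (has_deriv01_cont g g1 Hg) as Cg.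
  rewrite has_deriv01_lim in *. rewrite cont01_lim in Cg. intros t ht.
  assert (G := lim_along_plus _ _ _ _ _ (nested_pnear01 t)
      (lim_along_mult_cst _ _ _ _ _ (nested_pnear01 t) (Hf t ht)
         (lim_near01_pnear01 _ _ t (Cg t ht)))
      (lim_along_scal _ _ _ (f t) (Hg t ht))).
  eapply lim_along_ext; [|exact G]. intros d s [_ hne]. split; [field; lra | auto].
Qed.

Lemma has_deriv01_inv f f1 : has_deriv01 f f1 -> (forall t, I01 t -> f t <> 0) ->
  has_deriv01 (fun t => / f t) (fun t => - f1 t / (f t * f t)).
Proof.
  intros Hf Hn. pose proof (has_deriv01_cont f f1 Hf) as Cf.
  rewrite has_deriv01_lim in *. rewrite cont01_lim in Cf. intros t ht.
  assert (Gi := lim_along_inv_cst _ _ _ (nested_pnear01 t) (Hn t ht)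
                  (lim_near01_pnear01 _ _ t (Cf t ht))).
  assert (G := lim_along_scal _ _ _ (- / f t)
      (lim_along_mult_cst _ _ _ _ _ (nested_pnear01 t) (Hf t ht) Gi)).
  eapply lim_along_ext; [|exact G]. intros d s [[hs _] hne].
  pose proof (Hn s hs); pose proof (Hn t ht). split; field; auto; lra.
Qed.

(* Caratheodory's slope function: continuous at [y0] when [g] is differentiable
   there, it lets the chain rule avoid dividing by [s u - s t]. *)
Definition slope_at (g dg : R -> R) (y0 y : R) : R :=
  if Req_EM_T y y0 then dg y0 else (g y - g y0) / (y - y0).

Lemma slope_at_lim g dg y0 : has_deriv01 g dg -> I01 y0 ->
  lim_along (near01 y0) (slope_at g dg y0) (fun _ => dg y0).
Proof.
  intros H hy e he. destruct (H y0 hy e he) as [d [hd Hd]]. exists d; split; auto.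
  intros y [hy' hyd]. unfold slope_at. destruct (Req_EM_T y y0).
  - rewrite Rminus_diag, Rabs_R0; auto.
  - apply Hd; auto.
Qed.

Lemma slope_at_neq g dg y0 y : y <> y0 -> slope_at g dg y0 y = (g y - g y0) / (y - y0).
Proof. intros h. unfold slope_at. destruct (Req_EM_T y y0); tauto. Qed.

Lemma has_deriv01_comp g dg s ds : has_deriv01 g dg -> has_deriv01 s ds -> maps01 s ->
  has_deriv01 (fun t => g (s t)) (fun t => dg (s t) * ds t).
Proof.
  intros Hg Hs Hi. pose proof (proj1 (cont01_lim s) (has_deriv01_cont s ds Hs)) as Cs.
  apply has_deriv01_lim; intros t ht.
  assert (Gp := lim_along_comp_near01 _ _ s t (slope_at_lim g dg (s t) Hg (Hi t ht)) Hi
                  (Cs t ht)).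
  assert (G := lim_along_mult_cst _ _ _ _ _ (nested_pnear01 t)
                 (lim_near01_pnear01 _ _ t Gp) (proj1 (has_deriv01_lim s ds) Hs t ht)).
  eapply lim_along_ext; [|exact G]. intros d u [_ hne]. split; [|auto].
  destruct (Req_dec (s u) (s t)) as [E|E].
  - rewrite E. unfold Rdiv. rewrite !Rminus_diag. ring.
  - rewrite slope_at_neq by auto. field. split; lra.
Qed.

Lemma has_deriv01_unique f d1 d2 t :
  has_deriv01 f d1 -> has_deriv01 f d2 -> I01 t -> d1 t = d2 t.
Proof.
  intros H1 H2 ht. destruct (Req_dec (d1 t) (d2 t)) as [|hne]; auto. exfalso.
  set (e := Rabs (d1 t - d2 t) / 2).
  assert (he : 0 < e) by (apply Rdiv_lt_0_compat; [apply Rabs_pos_lt; lra | lra]).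
  destruct (H1 t ht e he) as [a1 [ha1 Ha1]]. destruct (H2 t ht e he) as [a2 [ha2 Ha2]].
  set (k := Rmin (1 / 2) (Rmin a1 a2) / 2).
  assert (hk : 0 < k /\ k < 1 / 2 /\ k < a1 /\ k < a2).
  { pose proof (Rmin_l (1 / 2) (Rmin a1 a2)); pose proof (Rmin_r (1 / 2) (Rmin a1 a2)).
    pose proof (Rmin_l a1 a2); pose proof (Rmin_r a1 a2).
    assert (0 < Rmin (1 / 2) (Rmin a1 a2)) by (repeat apply Rmin_glb_lt; lra).
    unfold k; lra. }
  set (s := if Rle_dec t (1 / 2) then t + k else t - k).
  assert (hs : I01 s /\ Rabs (s - t) = k).
  { destruct ht. unfold s; destruct (Rle_dec t (1 / 2)).
    - replace (t + k - t) with k by ring. rewrite Rabs_pos_eq by lra.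
      unfold I01; repeat split; lra.
    - replace (t - k - t) with (- k) by ring. rewrite Rabs_Ropp, Rabs_pos_eq by lra.
      unfold I01; repeat split; lra. }
  destruct hs as [hs hst].
  assert (hne' : s <> t) by (intro E; rewrite E, Rminus_diag, Rabs_R0 in hst; lra).
  specialize (Ha1 s hs hne' ltac:(lra)). specialize (Ha2 s hs hne' ltac:(lra)).
  set (q := (f s - f t) / (s - t)) in *.
  pose proof (Rabs_triang (q - d2 t) (- (q - d1 t))).
  rewrite Rabs_Ropp in H.
  replace (q - d2 t + - (q - d1 t)) with (d1 t - d2 t) in H by ring.
  unfold e in *. lra.
Qed.

(** * Compactness of [0,1] *)

(* Extending a function from [0,1] by clamping gives access to the standard
   library's theorems on continuous functions. *)
Definition clamp (x : R) : R := Rmax 0 (Rmin 1 x).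
Definition ext01 (f : R -> R) (x : R) : R := f (clamp x).

Lemma clamp_I01 x : I01 (clamp x).
Proof. unfold clamp, I01, Rmax, Rmin. destruct (Rle_dec 1 x); destruct (Rle_dec 0 _); lra. Qed.

Lemma clamp_id x : I01 x -> clamp x = x.
Proof.
  unfold clamp, I01, Rmax, Rmin. intros. destruct (Rle_dec 1 x); destruct (Rle_dec 0 _); lra.
Qed.

Lemma clamp_lipschitz x y : Rabs (clamp x - clamp y) <= Rabs (x - y).
Proof.
  unfold clamp, Rmax, Rmin.
  repeat match goal with
    | |- context [Rle_dec ?a ?b] => destruct (Rle_dec a b)
    | H : context [Rle_dec ?a ?b] |- _ => destruct (Rle_dec a b) end;
  unfold Rabs; repeat destruct Rcase_abs; lra.
Qed.

Lemma ext01_continuity f : cont01 f -> continuity (ext01 f).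
Proof.
  intros H x e he. destruct (H (clamp x) (clamp_I01 x) e he) as [d [hd Hd]].
  exists d; split; auto. intros y [_ hy]. apply Hd; [apply clamp_I01|].
  eapply Rle_lt_trans; [apply clamp_lipschitz | exact hy].
Qed.

Lemma cont01_unif f : cont01 f -> forall e, 0 < e -> exists d, 0 < d /\
  forall x y, I01 x -> I01 y -> Rabs (x - y) < d -> Rabs (f x - f y) < e.
Proof.
  intros H e he.
  destruct (Heine (ext01 f) (fun c => 0 <= c <= 1) (compact_P3 0 1)
     (fun c _ => ext01_continuity f H c) (mkposreal e he)) as [d Hd].
  exists d; split; [apply cond_pos|]. intros x y hx hy hxy.
  specialize (Hd x y hx hy hxy). unfold ext01 in Hd. rewrite !clamp_id in Hd; auto.
Qed.

Definition bounded01 (f : R -> R) : Prop := exists M, forall t, I01 t -> Rabs (f t) <= M.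

Lemma cont01_bounded f : cont01 f -> bounded01 f.
Proof.
  intros H.
  assert (Ca : forall c, 0 <= c <= 1 -> continuity_pt (fun x => Rabs (ext01 f x)) c).
  { intros c _. exact (continuity_pt_comp (ext01 f) Rabs c (ext01_continuity f H c)
                         (Rcontinuity_abs _)). }
  destruct (continuity_ab_maj _ 0 1 ltac:(lra) Ca) as [x [Hx _]].
  exists (Rabs (ext01 f x)). intros t ht. specialize (Hx t ht).
  unfold ext01 in *. rewrite (clamp_id t ht) in Hx. exact Hx.
Qed.

Lemma cont01_pos_lb f : cont01 f -> (forall t, I01 t -> 0 < f t) ->
  exists c, 0 < c /\ forall t, I01 t -> c <= f t.
Proof.
  intros H Hp.
  destruct (continuity_ab_min (ext01 f) 0 1 ltac:(lra)
     (fun c _ => ext01_continuity f H c)) as [x [Hx _]].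
  exists (ext01 f x). split; [apply Hp, clamp_I01|].
  intros t ht. specialize (Hx t ht). unfold ext01 in *. rewrite (clamp_id t ht) in Hx. auto.
Qed.

Lemma cont01_IVT f x y : cont01 f -> I01 x -> I01 y -> x <= y -> f x * f y <= 0 ->
  exists z, x <= z <= y /\ f z = 0.
Proof.
  intros H hx hy hxy hp.
  assert (hp' : ext01 f x * ext01 f y <= 0) by (unfold ext01; rewrite !clamp_id; auto).
  destruct (IVT_cor (ext01 f) x y (ext01_continuity f H) hxy hp') as [z [hz Hz]].
  exists z; split; auto. unfold ext01 in Hz. rewrite clamp_id in Hz; auto.
  destruct hx, hy; unfold I01; lra.
Qed.

Lemma ext01_derivable_pt_lim h h1 c : has_deriv01 h h1 -> 0 < c < 1 ->
  derivable_pt_lim (ext01 h) c (h1 c).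
Proof.
  intros H hc e he.
  destruct (H c ltac:(unfold I01; lra) e he) as [d [hd Hd]].
  assert (hp : 0 < Rmin d (Rmin c (1 - c))) by (repeat apply Rmin_glb_lt; lra).
  exists (mkposreal _ hp). intros k hk0 hk. simpl in hk.
  pose proof (Rmin_l d (Rmin c (1 - c))); pose proof (Rmin_r d (Rmin c (1 - c))).
  pose proof (Rmin_l c (1 - c)); pose proof (Rmin_r c (1 - c)).
  assert (hs : I01 (c + k)).
  { revert hk; unfold I01, Rabs; destruct Rcase_abs; intros; lra. }
  unfold ext01. rewrite !clamp_id by (auto; unfold I01; lra).
  replace k with (c + k - c) at 2 by ring. apply Hd; auto; [lra|].
  replace (c + k - c) with k by ring. lra.
Qed.

Lemma has_deriv01_MVT h h1 x y : has_deriv01 h h1 -> I01 x -> I01 y -> x < y ->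
  exists c, x < c < y /\ h y - h x = h1 c * (y - x).
Proof.
  intros H hx hy hxy. destruct hx, hy.
  assert (D : forall c, x < c < y -> derivable_pt_lim (ext01 h) c (h1 c))
    by (intros; apply ext01_derivable_pt_lim; auto; lra).
  set (pr := fun c (P : x < c < y) =>
               exist (fun l => derivable_pt_abs (ext01 h) c l) (h1 c) (D c P)).
  pose proof (ext01_continuity h (has_deriv01_cont h h1 H)) as Ch.
  destruct (MVT (ext01 h) id x y pr (fun c _ => derivable_pt_id c) hxy
     (fun c _ => Ch c) (fun c _ => derivable_continuous_pt _ _ (derivable_pt_id c)))
     as [c [P E]].
  exists c; split; auto. rewrite derive_pt_id in E. simpl in E. unfold id, ext01 in E.
  rewrite !clamp_id in E by (unfold I01; lra). lra.
Qed.

Lemma deriv_pos_of_nonzero r r1 : has_deriv01 r r1 -> cont01 r1 ->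
  (forall t, I01 t -> r1 t <> 0) -> r 0 < r 1 -> forall t, I01 t -> 0 < r1 t.
Proof.
  intros H Hc Hn Hr t ht.
  destruct (has_deriv01_MVT r r1 0 1 H I01_0 I01_1 ltac:(lra)) as [z [hz E]].
  assert (hzI : I01 z) by (unfold I01; lra).
  destruct (Rlt_le_dec 0 (r1 t)) as [|hle]; auto. exfalso.
  assert (hlt : r1 t < 0) by (destruct hle; auto; exfalso; apply (Hn t ht); auto).
  destruct ht. destruct (Rle_dec t z).
  - destruct (cont01_IVT r1 t z Hc ltac:(split; lra) hzI r0 ltac:(nra)) as [w [hw Hw]].
    apply (Hn w); auto. unfold I01; lra.
  - destruct (cont01_IVT r1 z t Hc hzI ltac:(split; lra) ltac:(lra) ltac:(nra))
      as [w [hw Hw]].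
    apply (Hn w); auto. unfold I01; lra.
Qed.

(** * Inverses of expanding maps of [0,1] *)

Definition expanding (c : R) (h : R -> R) : Prop :=
  forall x y, I01 x -> I01 y -> x <= y -> c * (y - x) <= h y - h x.

Lemma expanding_of_deriv_lb h h1 c : has_deriv01 h h1 ->
  (forall t, I01 t -> c <= h1 t) -> expanding c h.
Proof.
  intros H Hc x y hx hy hxy. destruct (Req_dec x y) as [->|hne].
  - rewrite !Rminus_diag. lra.
  - destruct (has_deriv01_MVT h h1 x y H hx hy ltac:(lra)) as [z [hz ->]].
    assert (hzI : I01 z) by (destruct hx, hy; unfold I01; lra).
    apply Rmult_le_compat_r; [lra | auto].
Qed.

Lemma expanding_dist c h x y : expanding c h -> I01 x -> I01 y ->
  c * Rabs (y - x) <= Rabs (h y - h x).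
Proof.
  intros H hx hy. destruct (Rle_dec x y).
  - pose proof (H x y hx hy r). rewrite (Rabs_pos_eq (y - x)) by lra.
    pose proof (Rle_abs (h y - h x)). lra.
  - pose proof (H y x hy hx ltac:(lra)). rewrite (Rabs_left (y - x)) by lra.
    rewrite Rabs_minus_sym. pose proof (Rle_abs (h x - h y)). lra.
Qed.

Lemma expanding_inverse c h : cont01 h -> expanding c h -> 0 < c -> h 0 = 0 -> h 1 = 1 ->
  exists sg, maps01 h /\ (forall s, I01 s -> I01 (sg s) /\ h (sg s) = s) /\
    (forall t, I01 t -> sg (h t) = t).
Proof.
  intros Hc He hc H0 H1.
  assert (Hmap : maps01 h).
  { intros t ht. pose proof (He 0 t I01_0 ht (proj1 ht)).
    pose proof (He t 1 ht I01_1 (proj2 ht)). destruct ht. unfold I01. nra. }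
  assert (Hinj : forall x y, I01 x -> I01 y -> h x = h y -> x = y).
  { intros x y hx hy E. pose proof (expanding_dist c h x y He hx hy) as D.
    rewrite E, Rminus_diag, Rabs_R0 in D. destruct (Req_dec x y) as [|hne]; auto.
    pose proof (Rabs_pos_lt (y - x) ltac:(lra)). nra. }
  (* clamping makes [h z = s] solvable for every real [s], so that [choice] applies *)
  assert (E : forall s, exists z, I01 z /\ h z = clamp s).
  { intros s. pose proof (clamp_I01 s) as hs.
    assert (Hcc : cont01 (fun z => h z + - clamp s))
      by (apply cont01_plus; auto; apply cont01_const).
    destruct (cont01_IVT _ 0 1 Hcc I01_0 I01_1 ltac:(lra)) as [z [hz Hz]].
    { rewrite H0, H1. destruct hs. nra. }
    exists z; split; [unfold I01; lra | lra]. }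
  destruct (choice _ E) as [sg Hsg].
  exists sg. split; auto.
  assert (Hsg' : forall s, I01 s -> I01 (sg s) /\ h (sg s) = s).
  { intros s hs. destruct (Hsg s) as [A ->]. split; auto. apply clamp_id; auto. }
  split; auto. intros t ht. destruct (Hsg' (h t) (Hmap t ht)) as [A B]. apply Hinj; auto.
Qed.

Lemma inverse_cont01 c h sg : 0 < c -> expanding c h ->
  (forall s, I01 s -> I01 (sg s) /\ h (sg s) = s) -> cont01 sg.
Proof.
  intros hc He Hsg s hs e he. exists (c * e); split; [nra|]. intros u hu hud.
  destruct (Hsg s hs) as [A1 B1]. destruct (Hsg u hu) as [A2 B2].
  pose proof (expanding_dist c h _ _ He A1 A2) as D. rewrite B1, B2 in D.
  apply (Rmult_lt_reg_l c); auto. lra.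
Qed.

Lemma inverse_has_deriv01 c h h1 sg : has_deriv01 h h1 -> 0 < c -> expanding c h ->
  (forall s, I01 s -> I01 (sg s) /\ h (sg s) = s) -> (forall s, I01 s -> h1 (sg s) <> 0) ->
  has_deriv01 sg (fun s => / h1 (sg s)).
Proof.
  intros Hd hc He Hsg Hn. apply has_deriv01_lim. intros s hs.
  destruct (Hsg s hs) as [A1 B1].
  pose proof (proj1 (cont01_lim sg) (inverse_cont01 c h sg hc He Hsg) s hs) as Cs.
  assert (G := lim_along_inv_cst _ _ _ (nested_pnear01 s) (Hn s hs)
     (lim_near01_pnear01 _ _ s (lim_along_comp_near01 _ _ sg s
        (slope_at_lim h h1 (sg s) Hd A1) (fun u hu => proj1 (Hsg u hu)) Cs))).
  eapply lim_along_ext; [|exact G]. intros d u [[hu _] hne]. split; auto.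
  destruct (Hsg u hu) as [A2 B2].
  assert (sg u <> sg s) by (intro E; apply hne; rewrite <- B1, <- B2, E; auto).
  rewrite slope_at_neq, B1, B2 by auto.
  field. split; lra.
Qed.

Definition inv_d1 (h1 sg : R -> R) (s : R) : R := / h1 (sg s).
Definition inv_d2 (h1 h2 sg : R -> R) (s : R) : R :=
  - (h2 (sg s) * (inv_d1 h1 sg s * inv_d1 h1 sg s * inv_d1 h1 sg s)).

Lemma C2data_cont f f1 f2 : C2data f f1 f2 -> cont01 f /\ cont01 f1 /\ cont01 f2.
Proof.
  intros [A [B C]]. split; [eapply has_deriv01_cont; eauto|].
  split; [eapply has_deriv01_cont; eauto | exact C].
Qed.

Lemma C2_inverse h h1 h2 : C2data h h1 h2 -> (forall t, I01 t -> 0 < h1 t) ->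
  h 0 = 0 -> h 1 = 1 ->
  exists sg, maps01 h /\ (forall s, I01 s -> I01 (sg s) /\ h (sg s) = s) /\
    (forall t, I01 t -> sg (h t) = t) /\ C2data sg (inv_d1 h1 sg) (inv_d2 h1 h2 sg).
Proof.
  intros HC Hp H0 H1. destruct HC as [Hd [Hd1 Hc2]].
  destruct (C2data_cont h h1 h2 (conj Hd (conj Hd1 Hc2))) as [Hc [Hc1 _]].
  destruct (cont01_pos_lb h1 Hc1 Hp) as [c [hc Hcm]].
  pose proof (expanding_of_deriv_lb h h1 c Hd Hcm) as He.
  destruct (expanding_inverse c h Hc He hc H0 H1) as [sg [Hmap [Hsg Hsh]]].
  assert (Hsg' : maps01 sg) by (intros s hs; apply Hsg, hs).
  assert (Hn : forall s, I01 s -> h1 (sg s) <> 0)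
    by (intros s hs; apply Rgt_not_eq, Hp, Hsg', hs).
  assert (Dsg := inverse_has_deriv01 c h h1 sg Hd hc He Hsg Hn).
  assert (Csg := has_deriv01_cont _ _ Dsg).
  assert (Ci : cont01 (inv_d1 h1 sg)) by (apply cont01_inv; auto; apply cont01_comp; auto).
  exists sg. split; [auto | split; [auto | split; [auto | split; [exact Dsg | split]]]].
  - eapply has_deriv01_ext;
      [exact (has_deriv01_inv _ _ (has_deriv01_comp h1 h2 sg _ Hd1 Dsg Hsg') Hn)| |];
      intros t ht; unfold inv_d2, inv_d1; auto.
    field. auto.
  - apply cont01_ext with (fun t => -1 * (h2 (sg t) *
                               (inv_d1 h1 sg t * inv_d1 h1 sg t * inv_d1 h1 sg t))).
    + apply cont01_scal, cont01_mult; [apply cont01_comp; auto|].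
      repeat apply cont01_mult; auto.
    + intros; unfold inv_d2; ring.
Qed.

(** * C^2 functions on [0,1] *)

Lemma C2_ext f f1 f2 g g1 g2 : C2data f f1 f2 ->
  (forall t, I01 t -> f t = g t /\ f1 t = g1 t /\ f2 t = g2 t) -> C2data g g1 g2.
Proof.
  intros [A [B C]] E. split; [|split].
  - eapply has_deriv01_ext; [exact A| |]; intros t ht; apply E; auto.
  - eapply has_deriv01_ext; [exact B| |]; intros t ht; apply E; auto.
  - eapply cont01_ext; [exact C|]; intros t ht; apply E; auto.
Qed.

Lemma C2_affine f f1 f2 k c : C2data f f1 f2 ->
  C2data (fun t => k * f t + c) (fun t => k * f1 t) (fun t => k * f2 t).
Proof.
  intros [A [B C]]. split; [|split].
  - eapply has_deriv01_ext;
      [exact (has_deriv01_plus _ _ _ _ (has_deriv01_scal k _ _ A) (has_deriv01_const c))| |];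
      intros; simpl; ring.
  - apply has_deriv01_scal; auto.
  - apply cont01_scal; auto.
Qed.

Lemma C2_const c : C2data (fun _ => c) (fun _ => 0) (fun _ => 0).
Proof.
  split; [apply has_deriv01_const | split; [apply has_deriv01_const | apply cont01_const]].
Qed.

Lemma C2_lerp a b : C2data (fun t => (1 - t) * a + t * b) (fun _ => b - a) (fun _ => 0).
Proof.
  eapply C2_ext; [exact (C2_affine _ _ _ (b - a) a (conj has_deriv01_id
                    (conj (has_deriv01_const 1) (cont01_const 0))))|].
  intros t _; repeat split; ring.
Qed.

Lemma C2_comp F F1 F2 s s1 s2 : C2data F F1 F2 -> C2data s s1 s2 -> maps01 s ->
  C2data (fun t => F (s t)) (fun t => F1 (s t) * s1 t)
    (fun t => F2 (s t) * s1 t * s1 t + F1 (s t) * s2 t).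
Proof.
  intros HF Hs Hi. destruct (C2data_cont _ _ _ HF) as [_ [cF1 cF2]].
  destruct (C2data_cont _ _ _ Hs) as [cs [cs1 cs2]].
  destruct HF as [A [B _]]; destruct Hs as [A' [B' _]]. split; [|split].
  - apply has_deriv01_comp; auto.
  - eapply has_deriv01_ext;
      [exact (has_deriv01_mult _ _ _ _ (has_deriv01_comp _ _ _ _ B A' Hi) B')| |];
      intros; auto.
  - apply cont01_plus; repeat apply cont01_mult; auto; apply cont01_comp; auto.
Qed.

(** * Uniform convergence on [0,1] along a family *)

Definition unif_along {D : Type} (C : R -> D -> Prop) (Q : D -> R -> R) (L : R -> R) : Prop :=
  forall e, 0 < e -> exists r, 0 < r /\ forall p s, C r p -> I01 s -> Rabs (Q p s - L s) < e.

Definition on01 {D : Type} (C : R -> D -> Prop) (r : R) (x : D * R) : Prop :=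
  C r (fst x) /\ I01 (snd x).

Lemma unif_along_lim {D : Type} (C : R -> D -> Prop) Q L :
  unif_along C Q L <-> lim_along (on01 C) (fun x => Q (fst x) (snd x)) (fun x => L (snd x)).
Proof.
  split; intros H e he; destruct (H e he) as [r [hr Hr]]; exists r; split; auto.
  - intros [p s] [h1 h2]; simpl in *; auto.
  - intros p s h1 h2. apply (Hr (p, s)). split; auto.
Qed.

Lemma nested_on01 {D : Type} (C : R -> D -> Prop) : nested C -> nested (on01 C).
Proof. intros Hm d d' [p s] hd hdd [h1 h2]. split; auto. eapply Hm; eauto. Qed.

Lemma unif_along_ext {D : Type} (C : R -> D -> Prop) Q Q' L L' :
  (forall r p s, C r p -> I01 s -> Q p s = Q' p s) -> (forall s, I01 s -> L s = L' s) ->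
  unif_along C Q L -> unif_along C Q' L'.
Proof.
  intros E1 E2 H e he. destruct (H e he) as [r [hr Hr]]. exists r; split; auto.
  intros p s hp hs. rewrite <- (E1 r p s), <- E2; auto.
Qed.

Lemma unif_along_plus {D : Type} (C : R -> D -> Prop) Q1 Q2 L1 L2 : nested C ->
  unif_along C Q1 L1 -> unif_along C Q2 L2 ->
  unif_along C (fun p s => Q1 p s + Q2 p s) (fun s => L1 s + L2 s).
Proof.
  rewrite !unif_along_lim. intros Hm H1 H2.
  exact (lim_along_plus _ _ _ _ _ (nested_on01 C Hm) H1 H2).
Qed.

Lemma unif_along_scal {D : Type} (C : R -> D -> Prop) Q L k :
  unif_along C Q L -> unif_along C (fun p s => k * Q p s) (fun s => k * L s).
Proof. rewrite !unif_along_lim. exact (lim_along_scal _ _ _ k). Qed.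

Lemma unif_along_mult {D : Type} (C : R -> D -> Prop) Q1 Q2 L1 L2 : nested C ->
  bounded01 L1 -> bounded01 L2 -> unif_along C Q1 L1 -> unif_along C Q2 L2 ->
  unif_along C (fun p s => Q1 p s * Q2 p s) (fun s => L1 s * L2 s).
Proof.
  rewrite !unif_along_lim. intros Hm [M1 B1] [M2 B2] H1 H2.
  apply (lim_along_mult _ _ _ _ _ M1 M2 (nested_on01 C Hm)); auto.
  intros [p s] [_ hs]; simpl in *; auto.
Qed.

Lemma unif_along_inv {D : Type} (C : R -> D -> Prop) Q L c : nested C -> 0 < c ->
  (forall s, I01 s -> c <= Rabs (L s)) ->
  unif_along C Q L -> unif_along C (fun p s => / Q p s) (fun s => / L s).
Proof.
  rewrite !unif_along_lim. intros Hm hc B H.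
  apply (lim_along_inv _ _ _ c (nested_on01 C Hm)); auto.
  intros [p s] [_ hs]; simpl in *; auto.
Qed.

Lemma unif_along_comp {D : Type} (C : R -> D -> Prop) K H S T : nested C ->
  unif_along C K H -> unif_along C S T -> cont01 H ->
  (forall r p s, C r p -> I01 s -> I01 (S p s)) -> maps01 T ->
  unif_along C (fun p s => K p (S p s)) (fun s => H (T s)).
Proof.
  intros Hm HK HS HH HSi HTi e he.
  destruct (cont01_unif H HH (e / 2) ltac:(lra)) as [d [hd Hd]].
  destruct (HS d hd) as [r1 [hr1 Hr1]].
  destruct (HK (e / 2) ltac:(lra)) as [r2 [hr2 Hr2]].
  exists (Rmin r1 r2); split; [apply Rmin_glb_lt; auto|]. intros p s hp hs.
  destruct (nested_Rmin C r1 r2 p Hm hr1 hr2 hp) as [hp1 hp2].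
  assert (A1 := Hr2 p (S p s) hp2 (HSi _ _ _ hp hs)).
  assert (A2 := Hd (S p s) (T s) (HSi _ _ _ hp hs) (HTi s hs) (Hr1 p s hp1 hs)).
  replace (K p (S p s) - H (T s)) with ((K p (S p s) - H (S p s)) + (H (S p s) - H (T s)))
    by ring.
  eapply Rle_lt_trans; [apply Rabs_triang|]. lra.
Qed.

Lemma unif_along_inverse {D : Type} (C : R -> D -> Prop) tp tf sp sf c : 0 < c ->
  unif_along C tp tf ->
  (forall r p s, C r p -> I01 s -> I01 (sp p s) /\ tp p (sp p s) = s) ->
  (forall s, I01 s -> I01 (sf s) /\ tf (sf s) = s) -> expanding c tf ->
  unif_along C sp sf.
Proof.
  intros hc H Hp Hf He e he.
  destruct (H (c * e) ltac:(nra)) as [r [hr Hr]]. exists r; split; auto.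
  intros p s hp hs.
  destruct (Hp r p s hp hs) as [A1 B1]. destruct (Hf s hs) as [A2 B2].
  specialize (Hr p (sp p s) hp A1).
  pose proof (expanding_dist c tf _ _ He A2 A1) as K.
  assert (E : tf (sf s) = tp p (sp p s)) by (rewrite B1, B2; reflexivity).
  rewrite E in K. rewrite Rabs_minus_sym in Hr.
  apply (Rmult_lt_reg_l c); auto. lra.
Qed.

Lemma nested_forall_lt {D : Type} (C : R -> D -> Prop) (P : nat -> D -> Prop) n :
  nested C -> (forall j, (j < n)%nat -> exists r, 0 < r /\ forall p, C r p -> P j p) ->
  exists r, 0 < r /\ forall p, C r p -> forall j, (j < n)%nat -> P j p.
Proof.
  intros Hm. induction n as [|n IH]; intros H.
  - exists 1; split; [lra|]. intros; lia.
  - destruct IH as [r1 [hr1 Hr1]]; [intros j hj; apply H; lia|].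
    destruct (H n ltac:(lia)) as [r2 [hr2 Hr2]].
    exists (Rmin r1 r2); split; [apply Rmin_glb_lt; auto|]. intros p hp j hj.
    destruct (nested_Rmin C r1 r2 p Hm hr1 hr2 hp) as [hp1 hp2].
    destruct (Nat.eq_dec j n) as [->|hne]; auto.
    apply Hr1; auto; lia.
Qed.

(** * The chart [Xi] *)

Definition Xi_d1 (a b : R) (u1 : R -> nat -> R) (t : R) (i : nat) : R :=
  match i with O => b - a | S j => u1 t j end.
Definition Xi_d2 (u2 : R -> nat -> R) (t : R) (i : nat) : R :=
  match i with O => 0 | S j => u2 t j end.

Lemma Xi_C2 m a b u u1 u2 : C2vdata m u u1 u2 ->
  C2vdata (S m) (Xi (a, b, u)) (Xi_d1 a b u1) (Xi_d2 u2).
Proof.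
  intros H [|j] hj; simpl; [apply C2_lerp | apply H; lia].
Qed.

Lemma Xi_reparam_inj m a b u w' : a <> b -> reparam m (Xi (a, b, u)) (Xi w') ->
  Xeq m (a, b, u) w'.
Proof.
  destruct w' as [[a' b'] u']. intros hab [tau [[_ [t0 [t1 _]]] E]].
  pose proof (E 0 0%nat I01_0 ltac:(lia)) as E0. pose proof (E 1 0%nat I01_1 ltac:(lia)) as E1.
  simpl in E0, E1. rewrite t0 in E0. rewrite t1 in E1.
  assert (a = a') by lra. assert (b = b') by lra. subst a' b'.
  split; [auto | split; [auto|]]. intros t i ht hi.
  assert (Htau : tau t = t).
  { pose proof (E t 0%nat ht ltac:(lia)) as Et. simpl in Et.
    assert (Z : (b - a) * (tau t - t) = 0) by lra.
    apply Rmult_integral in Z. destruct Z; lra. }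
  pose proof (E t (S i) ht ltac:(lia)) as Es. simpl in Es. rewrite Htau in Es. auto.
Qed.

Lemma Rabs_lerp_sub_lt a b a' b' t r : I01 t -> Rabs (a - a') < r -> Rabs (b - b') < r ->
  Rabs ((1 - t) * a + t * b - ((1 - t) * a' + t * b')) < r.
Proof.
  intros [h0 h1] ha hb.
  replace ((1 - t) * a + t * b - ((1 - t) * a' + t * b'))
    with ((1 - t) * (a - a') + t * (b - b')) by ring.
  eapply Rle_lt_trans; [apply Rabs_triang|]. rewrite !Rabs_mult.
  rewrite (Rabs_pos_eq (1 - t)), (Rabs_pos_eq t) by lra.
  assert ((1 - t) * Rabs (a - a') <= (1 - t) * r) by (apply Rmult_le_compat_l; lra).
  destruct (Req_dec t 0) as [->|hne]; [lra|].
  assert (t * Rabs (b - b') < t * r) by (apply Rmult_lt_compat_l; lra). lra.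
Qed.

Lemma Xi_c2near m w w' r : Xnear m w w' r -> c2near (S m) (Xi w) (Xi w') (2 * r).
Proof.
  destruct w as [[a b] u]; destruct w' as [[a' b'] u'].
  intros [ha [hb [u1 [u2 [u1' [u2' [A [B Hu]]]]]]]].
  exists (Xi_d1 a b u1), (Xi_d2 u2), (Xi_d1 a' b' u1'), (Xi_d2 u2').
  split; [apply Xi_C2; auto | split; [apply Xi_C2; auto|]].
  intros t [|j] ht hj; simpl.
  - pose proof (Rabs_lerp_sub_lt a b a' b' t r ht ha hb). pose proof (Rabs_pos (a - a')).
    split; [lra | split].
    + replace (b - a - (b' - a')) with ((b - b') + - (a - a')) by ring.
      eapply Rle_lt_trans; [apply Rabs_triang|]. rewrite Rabs_Ropp. lra.
    + rewrite Rminus_diag, Rabs_R0. lra.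
  - destruct (Hu t j ht ltac:(lia)) as [c1 [c2 c3]].
    assert (0 < r) by (pose proof (Rabs_pos (a - a')); lra). repeat split; lra.
Qed.

Lemma c2near_mono k f g r r' : r <= r' -> c2near k f g r -> c2near k f g r'.
Proof.
  intros hr [f1 [f2 [g1 [g2 [A [B C]]]]]]. exists f1, f2, g1, g2.
  split; [auto | split; [auto|]]. intros t i ht hi.
  destruct (C t i ht hi) as [c1 [c2 c3]]. repeat split; lra.
Qed.

Lemma c2near_eq_l k f f' g r : (forall t i, I01 t -> (i < k)%nat -> f t i = f' t i) ->
  c2near k f' g r -> c2near k f g r.
Proof.
  intros E [f1 [f2 [g1 [g2 [A [B C]]]]]]. exists f1, f2, g1, g2. split; [|split; auto].
  - intros i hi. eapply C2_ext; [exact (A i hi)|].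
    intros t ht. split; [symmetry; apply E; auto | split; auto].
  - intros t i ht hi. rewrite E; auto.
Qed.

Lemma c2near_with k f f1 f2 g r : C2vdata k f f1 f2 -> c2near k f g r ->
  exists g1 g2, C2vdata k g g1 g2 /\ forall t i, I01 t -> (i < k)%nat ->
    Rabs (f t i - g t i) < r /\ Rabs (f1 t i - g1 t i) < r /\ Rabs (f2 t i - g2 t i) < r.
Proof.
  intros Hf [F1 [F2 [g1 [g2 [HF [Hg Hb]]]]]]. exists g1, g2. split; auto.
  intros t i ht hi.
  destruct (HF i hi) as [DF [DF1 _]]. destruct (Hf i hi) as [Df [Df1 _]].
  assert (E1 : F1 t i = f1 t i)
    by exact (has_deriv01_unique (fun t => f t i) _ _ t DF Df ht).
  assert (E2 : F2 t i = f2 t i).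
  { apply (has_deriv01_unique (fun t => f1 t i) (fun t => F2 t i) (fun t => f2 t i)); auto.
    eapply has_deriv01_ext; [exact DF1| |]; intros s hs; simpl; auto.
    exact (has_deriv01_unique (fun t => f t i) _ _ s DF Df hs). }
  rewrite <- E1, <- E2. apply Hb; auto.
Qed.

Section Chart.

Variables (m : nat) (eta delta : R).
Hypotheses (hdelta : 0 < delta < eta) (hdelta2 : delta <= 1 / 2).

Definition W5 (w : X) : Prop :=
  let '(a, b, u) := w in (- delta < a < delta) /\ (1 - delta < b < 1 + delta) /\ isC2v m u.

Lemma W5_lt a b u : W5 (a, b, u) -> a < b.
Proof. intros [ha [hb _]]. lra. Qed.

Lemma W5_Omega w : W5 w -> Omega m eta (Xi w).
Proof.
  destruct w as [[a b] u]. intros [ha [hb [u1 [u2 hu]]]]. split.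
  - intros t [ht0 ht1]. unfold inG. simpl. split; nra.
  - exists (Xi_d1 a b u1), (Xi_d2 u2). split; [apply Xi_C2; auto|].
    intros t ht. exists 0%nat. split; [lia|]. simpl. lra.
Qed.

Lemma W5_open : XOpen m W5.
Proof.
  split; [intros [[a b] u] [_ [_ H]]; exact H|].
  intros [[a b] u] [ha [hb hu]].
  set (r := Rmin (delta - Rabs a) (delta - Rabs (b - 1))).
  assert (Hr : r <= delta - Rabs a /\ r <= delta - Rabs (b - 1))
    by (split; [apply Rmin_l | apply Rmin_r]).
  assert (hr : 0 < r) by (apply Rmin_glb_lt; unfold Rabs; destruct Rcase_abs; lra).
  exists r; split; auto. intros [[a' b'] u'] hin [h1 [h2 _]].
  revert Hr h1 h2; unfold Rabs; repeat destruct Rcase_abs; intros;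
    (split; [lra | split; [lra | exact hin]]).
Qed.

Lemma W5_Xi_preimage_open S : OmegaOpen m eta S ->
  XOpen m (fun w => W5 w /\ S (Xi w)).
Proof.
  intros [_ HS]. split; [intros w [hw _]; apply (proj1 W5_open); auto|].
  intros w [hw hS]. destruct (HS (Xi w) hS) as [r [hr Hr]].
  destruct (proj2 W5_open w hw) as [r5 [hr5 Hr5]].
  exists (Rmin (r / 2) r5); split; [apply Rmin_glb_lt; lra|]. intros w' hin hn.
  pose proof (Rmin_l (r / 2) r5); pose proof (Rmin_r (r / 2) r5).
  assert (hn' : forall r', Rmin (r / 2) r5 <= r' -> Xnear m w w' r').
  { destruct w as [[a b] u]; destruct w' as [[a' b'] u']. intros r' hr'.
    destruct hn as [h1 [h2 h3]].
    split; [lra | split; [lra | eapply c2near_mono; eauto]]. }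
  assert (hw' : W5 w') by (apply Hr5; auto).
  split; auto. apply Hr; [apply W5_Omega; auto|].
  apply c2near_mono with (2 * (r / 2)); [lra | apply Xi_c2near, hn'; auto].
Qed.

End Chart.

(** * The normal form of a curve *)

Definition tau_of (g : R -> nat -> R) (t : R) : R := (g t O - g 0 O) / (g 1 O - g 0 O).
Definition tau1_of (g g1 : R -> nat -> R) (t : R) : R := g1 t O / (g 1 O - g 0 O).
Definition tau2_of (g g2 : R -> nat -> R) (t : R) : R := g2 t O / (g 1 O - g 0 O).

Definition sig1_of (g g1 : R -> nat -> R) (sg : R -> R) : R -> R :=
  inv_d1 (tau1_of g g1) sg.
Definition sig2_of (g g1 g2 : R -> nat -> R) (sg : R -> R) : R -> R :=
  inv_d2 (tau1_of g g1) (tau2_of g g2) sg.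

Definition u_of (g : R -> nat -> R) (sg : R -> R) (s : R) (j : nat) : R := g (sg s) (S j).
Definition u1_of (g g1 : R -> nat -> R) (sg : R -> R) (s : R) (j : nat) : R :=
  g1 (sg s) (S j) * sig1_of g g1 sg s.
Definition u2_of (g g1 g2 : R -> nat -> R) (sg : R -> R) (s : R) (j : nat) : R :=
  g2 (sg s) (S j) * sig1_of g g1 sg s * sig1_of g g1 sg s +
  g1 (sg s) (S j) * sig2_of g g1 g2 sg s.

Definition normal_data (m : nat) (g g1 g2 : R -> nat -> R) (sg : R -> R) : Prop :=
  C2vdata (S m) g g1 g2 /\ (forall t, I01 t -> 0 < g1 t O) /\ maps01 (tau_of g) /\
  (forall s, I01 s -> I01 (sg s) /\ tau_of g (sg s) = s) /\
  (forall t, I01 t -> sg (tau_of g t) = t) /\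
  C2data sg (sig1_of g g1 sg) (sig2_of g g1 g2 sg).

Lemma tau_C2 m g g1 g2 : C2vdata (S m) g g1 g2 ->
  C2data (tau_of g) (tau1_of g g1) (tau2_of g g2).
Proof.
  intros H. set (k := / (g 1 O - g 0 O)).
  eapply C2_ext; [exact (C2_affine _ _ _ k (- g 0 O * k) (H O ltac:(lia)))|].
  intros t ht. unfold tau_of, tau1_of, tau2_of, Rdiv, k. repeat split; ring.
Qed.

Lemma first_coord_increasing m g g1 g2 : C2vdata (S m) g g1 g2 ->
  (forall t, I01 t -> 0 < g1 t O) -> g 0 O < g 1 O.
Proof.
  intros H hp. destruct (H O ltac:(lia)) as [D _].
  destruct (has_deriv01_MVT _ _ 0 1 D I01_0 I01_1 ltac:(lra)) as [c [hc E]].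
  specialize (hp c ltac:(unfold I01; lra)). lra.
Qed.

Lemma normal_data_exists m g g1 g2 : C2vdata (S m) g g1 g2 ->
  (forall t, I01 t -> 0 < g1 t O) -> exists sg, normal_data m g g1 g2 sg.
Proof.
  intros H hp. pose proof (first_coord_increasing m g g1 g2 H hp) as hab.
  destruct (C2_inverse (tau_of g) (tau1_of g g1) (tau2_of g g2) (tau_C2 m g g1 g2 H))
    as [sg [A [B [C D]]]].
  - intros t ht. apply Rdiv_lt_0_compat; [auto | lra].
  - unfold tau_of, Rdiv. rewrite Rminus_diag. ring.
  - unfold tau_of. field. lra.
  - exists sg. exact (conj H (conj hp (conj A (conj B (conj C D))))).
Qed.

Lemma normal_data_u_C2 m g g1 g2 sg : normal_data m g g1 g2 sg ->
  C2vdata m (u_of g sg) (u1_of g g1 sg) (u2_of g g1 g2 sg).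
Proof.
  intros [H [_ [_ [B [_ Hs]]]]] j hj.
  apply (C2_comp (fun t => g t (S j)) (fun t => g1 t (S j)) (fun t => g2 t (S j)));
    [apply H; lia | exact Hs | intros s hs; apply B, hs].
Qed.

Lemma normal_data_reparam m g g1 g2 sg : normal_data m g g1 g2 sg ->
  reparam m g (Xi (g 0 O, g 1 O, u_of g sg)).
Proof.
  intros Hn. destruct Hn as [H [hp [hm [B [C D]]]]].
  pose proof (first_coord_increasing m g g1 g2 H hp) as hab.
  exists (tau_of g). split.
  - split; [exists (tau1_of g g1), (tau2_of g g2); eapply tau_C2; eauto|].
    split; [unfold tau_of, Rdiv; rewrite Rminus_diag; ring|].
    split; [unfold tau_of; field; lra|]. split; auto.
    exists sg. split; [exists (sig1_of g g1 sg), (sig2_of g g1 g2 sg); auto|].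
    split; [intros s hs; apply B, hs|]. intros t ht. split; auto. apply B, ht.
  - intros t [|j] ht hi; simpl.
    + unfold tau_of. field. lra.
    + unfold u_of. rewrite C; auto.
Qed.

Lemma Diff2_deriv_pos rho r1 r2 : Diff2 rho -> C2data rho r1 r2 ->
  forall t, I01 t -> 0 < r1 t.
Proof.
  intros [_ [R0 [R1 [Rmap [sr [[s1 [s2 [Ds _]]] [_ Hinv]]]]]]] [Dr [Dr1 _]].
  apply (deriv_pos_of_nonzero rho r1 Dr (has_deriv01_cont _ _ Dr1)); [|lra].
  intros t ht E.
  (* differentiating [sr (rho t) = t] gives [s1 (rho t) * r1 t = 1] *)
  assert (D2 : has_deriv01 (fun t => sr (rho t)) (fun _ => 1)).
  { eapply has_deriv01_ext; [exact has_deriv01_id| |]; intros s hs; auto.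
    symmetry. apply Hinv, hs. }
  pose proof (has_deriv01_unique _ _ _ t (has_deriv01_comp _ _ _ _ Ds Dr Rmap) D2 ht) as U.
  simpl in U. rewrite E in U. lra.
Qed.

Lemma reparam_Xi_normal_form m f f1 f2 a b u : C2vdata (S m) f f1 f2 ->
  reparam m f (Xi (a, b, u)) -> a < b ->
  exists sf, normal_data m f f1 f2 sf /\ f 0 O = a /\ f 1 O = b /\
    forall s j, I01 s -> (j < m)%nat -> u s j = u_of f sf s j.
Proof.
  intros HC [rho [HD E]] hab.
  assert (F0 : forall t, I01 t -> f t O = (1 - rho t) * a + rho t * b)
    by (intros t ht; exact (E t O ht ltac:(lia))).
  pose proof HD as [[r1 [r2 Hr]] [R0 [R1 _]]].
  assert (Fa : f 0 O = a) by (rewrite F0, R0 by apply I01_0; ring).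
  assert (Fb : f 1 O = b) by (rewrite F0, R1 by apply I01_1; ring).
  assert (hp : forall t, I01 t -> 0 < f1 t O).
  { intros t ht.
    assert (D : has_deriv01 (fun t => f t O) (fun t => (b - a) * r1 t)).
    { destruct (C2_affine _ _ _ (b - a) a Hr) as [D _].
      eapply has_deriv01_ext; [exact D| |]; intros s hs; auto. rewrite F0 by auto. ring. }
    destruct (HC O ltac:(lia)) as [Df _].
    rewrite (has_deriv01_unique _ _ _ t Df D ht).
    pose proof (Diff2_deriv_pos rho r1 r2 HD Hr t ht). nra. }
  destruct (normal_data_exists m f f1 f2 HC hp) as [sf Hf].
  exists sf. split; [exact Hf | split; [exact Fa | split; [exact Fb|]]].
  intros s j hs hj. destruct Hf as [_ [_ [_ [Hsf _]]]]. destruct (Hsf s hs) as [A B].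
  unfold u_of. rewrite (E (sf s) (S j) A ltac:(lia)). simpl. f_equal.
  rewrite <- B at 1. unfold tau_of. rewrite F0, Fa, Fb by auto. field. lra.
Qed.

(** * Continuity of the normal form *)

Record curve_data : Type := CurveData {
  cd_g : R -> nat -> R; cd_g1 : R -> nat -> R; cd_g2 : R -> nat -> R; cd_sigma : R -> R }.

Definition near_data (m : nat) (f f1 f2 : R -> nat -> R) (r : R) (p : curve_data) : Prop :=
  normal_data m (cd_g p) (cd_g1 p) (cd_g2 p) (cd_sigma p) /\
  forall t i, I01 t -> (i < S m)%nat ->
    Rabs (f t i - cd_g p t i) < r /\ Rabs (f1 t i - cd_g1 p t i) < r /\
    Rabs (f2 t i - cd_g2 p t i) < r.

Lemma nested_near_data m f f1 f2 : nested (near_data m f f1 f2).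
Proof.
  intros d d' p hd hdd [V B]. split; auto. intros t i ht hi.
  destruct (B t i ht hi) as [b1 [b2 b3]]. repeat split; lra.
Qed.

Lemma unif_along_and3 {D : Type} (C : R -> D -> Prop) Q1 Q2 Q3 L1 L2 L3 : nested C ->
  unif_along C Q1 L1 -> unif_along C Q2 L2 -> unif_along C Q3 L3 ->
  forall e, 0 < e -> exists r, 0 < r /\ forall p, C r p -> forall s, I01 s ->
    Rabs (Q1 p s - L1 s) < e /\ Rabs (Q2 p s - L2 s) < e /\ Rabs (Q3 p s - L3 s) < e.
Proof.
  intros Hm H1 H2 H3 e he.
  destruct (H1 e he) as [r1 [hr1 Hr1]]. destruct (H2 e he) as [r2 [hr2 Hr2]].
  destruct (H3 e he) as [r3 [hr3 Hr3]].
  assert (hr23 : 0 < Rmin r2 r3) by (apply Rmin_glb_lt; auto).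
  exists (Rmin r1 (Rmin r2 r3)); split; [apply Rmin_glb_lt; auto|]. intros p hp s hs.
  destruct (nested_Rmin C _ _ p Hm hr1 hr23 hp) as [hp1 hp23].
  destruct (nested_Rmin C _ _ p Hm hr2 hr3 hp23) as [hp2 hp3]. auto.
Qed.

Section NormalFormContinuity.

Variables (m : nat) (f f1 f2 : R -> nat -> R) (sf : R -> R).
Hypothesis Hf : normal_data m f f1 f2 sf.

Local Notation near := (near_data m f f1 f2).

Lemma near_sigma_maps r p s : near r p -> I01 s -> I01 (cd_sigma p s).
Proof. intros [[_ [_ [_ [B _]]]] _] hs. apply B, hs. Qed.

Lemma sf_maps : maps01 sf.
Proof. destruct Hf as [_ [_ [_ [B _]]]]. intros s hs. apply B, hs. Qed.

Lemma f_coord_cont i : (i < S m)%nat ->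
  cont01 (fun t => f t i) /\ cont01 (fun t => f1 t i) /\ cont01 (fun t => f2 t i).
Proof. destruct Hf as [HC _]. intros hi. exact (C2data_cont _ _ _ (HC i hi)). Qed.

Lemma unif_coords i : (i < S m)%nat ->
  unif_along near (fun p t => cd_g p t i) (fun t => f t i) /\
  unif_along near (fun p t => cd_g1 p t i) (fun t => f1 t i) /\
  unif_along near (fun p t => cd_g2 p t i) (fun t => f2 t i).
Proof.
  intros hi. repeat split; intros e he; exists e; split; auto; intros p t [_ B] ht;
    rewrite Rabs_minus_sym; apply (B t i ht hi).
Qed.

Lemma unif_endpoint t0 : I01 t0 ->
  unif_along near (fun p _ => cd_g p t0 O) (fun _ => f t0 O).
Proof.
  intros ht0 e he. exists e; split; auto. intros p t [_ B] _.
  rewrite Rabs_minus_sym. apply (B t0 O ht0 ltac:(lia)).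
Qed.

Lemma unif_span :
  unif_along near (fun p _ => cd_g p 1 O + -1 * cd_g p 0 O) (fun _ => f 1 O + -1 * f 0 O).
Proof.
  apply unif_along_plus; [apply nested_near_data | apply unif_endpoint, I01_1|].
  apply unif_along_scal, unif_endpoint, I01_0.
Qed.

Lemma unif_inv_span :
  unif_along near (fun p _ => / (cd_g p 1 O - cd_g p 0 O)) (fun _ => / (f 1 O - f 0 O)).
Proof.
  destruct Hf as [HC [hp _]]. pose proof (first_coord_increasing m f f1 f2 HC hp) as hab.
  assert (Hlb : forall s : R, I01 s -> f 1 O - f 0 O <= Rabs (f 1 O + -1 * f 0 O))
    by (intros s _; rewrite Rabs_pos_eq; lra).
  eapply unif_along_ext; [| |exact (unif_along_inv _ _ _ (f 1 O - f 0 O)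
    (nested_near_data m f f1 f2) ltac:(lra) Hlb unif_span)]; intros; simpl; f_equal; ring.
Qed.

Lemma unif_tau : unif_along near (fun p => tau_of (cd_g p)) (tau_of f).
Proof.
  destruct (f_coord_cont O ltac:(lia)) as [C0 _].
  assert (U := unif_along_mult near _ _ _ _ (nested_near_data m f f1 f2)
    (cont01_bounded _ (cont01_plus _ _ C0 (cont01_const (-1 * f 0 O))))
    (cont01_bounded _ (cont01_const _))
    (unif_along_plus near _ _ _ _ (nested_near_data m f f1 f2)
       (proj1 (unif_coords O ltac:(lia))) (unif_along_scal near _ _ (-1) (unif_endpoint 0 I01_0)))
    unif_inv_span).
  eapply unif_along_ext; [| |exact U]; intros; unfold tau_of, Rdiv; simpl; ring.
Qed.

Lemma unif_tau1 : unif_along near (fun p => tau1_of (cd_g p) (cd_g1 p)) (tau1_of f f1).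
Proof.
  destruct (f_coord_cont O ltac:(lia)) as [_ [C1 _]].
  assert (U := unif_along_mult near _ _ _ _ (nested_near_data m f f1 f2)
    (cont01_bounded _ C1) (cont01_bounded _ (cont01_const _))
    (proj1 (proj2 (unif_coords O ltac:(lia)))) unif_inv_span).
  eapply unif_along_ext; [| |exact U]; intros; unfold tau1_of, Rdiv; simpl; ring.
Qed.

Lemma unif_tau2 : unif_along near (fun p => tau2_of (cd_g p) (cd_g2 p)) (tau2_of f f2).
Proof.
  destruct (f_coord_cont O ltac:(lia)) as [_ [_ C2]].
  assert (U := unif_along_mult near _ _ _ _ (nested_near_data m f f1 f2)
    (cont01_bounded _ C2) (cont01_bounded _ (cont01_const _))
    (proj2 (proj2 (unif_coords O ltac:(lia)))) unif_inv_span).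
  eapply unif_along_ext; [| |exact U]; intros; unfold tau2_of, Rdiv; simpl; ring.
Qed.

Lemma tau1_lb : exists c, 0 < c /\ forall t, I01 t -> c <= tau1_of f f1 t.
Proof.
  destruct Hf as [HC [hp _]]. pose proof (first_coord_increasing m f f1 f2 HC hp) as hab.
  destruct (C2data_cont _ _ _ (tau_C2 m f f1 f2 HC)) as [_ [Ct1 _]].
  apply (cont01_pos_lb _ Ct1). intros t ht. apply Rdiv_lt_0_compat; [auto | lra].
Qed.

Lemma unif_sigma : unif_along near cd_sigma sf.
Proof.
  destruct tau1_lb as [c [hc Hc]]. destruct Hf as [HC [_ [_ [Hsf _]]]].
  destruct (tau_C2 m f f1 f2 HC) as [Dt _].
  apply (unif_along_inverse near (fun p => tau_of (cd_g p)) (tau_of f) _ _ c hc unif_tau).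
  - intros r p s [[_ [_ [_ [B _]]]] _] hs. apply B, hs.
  - exact Hsf.
  - exact (expanding_of_deriv_lb _ _ c Dt Hc).
Qed.

Lemma sf_cont : cont01 sf /\ cont01 (sig1_of f f1 sf) /\ cont01 (sig2_of f f1 f2 sf).
Proof. destruct Hf as [_ [_ [_ [_ [_ Hs]]]]]. exact (C2data_cont _ _ _ Hs). Qed.

Lemma unif_sig1 :
  unif_along near (fun p => sig1_of (cd_g p) (cd_g1 p) (cd_sigma p)) (sig1_of f f1 sf).
Proof.
  destruct tau1_lb as [c [hc Hc]]. destruct Hf as [HC _].
  destruct (C2data_cont _ _ _ (tau_C2 m f f1 f2 HC)) as [_ [Ct1 _]].
  unfold sig1_of, inv_d1.
  apply (unif_along_inv near _ _ c (nested_near_data m f f1 f2) hc).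
  - intros s hs. specialize (Hc _ (sf_maps s hs)). rewrite Rabs_pos_eq; lra.
  - exact (unif_along_comp near _ _ _ _ (nested_near_data m f f1 f2) unif_tau1 unif_sigma
             Ct1 near_sigma_maps sf_maps).
Qed.

Lemma unif_sig2 : unif_along near
  (fun p => sig2_of (cd_g p) (cd_g1 p) (cd_g2 p) (cd_sigma p)) (sig2_of f f1 f2 sf).
Proof.
  destruct Hf as [HC _]. pose proof (nested_near_data m f f1 f2) as Hm.
  destruct (C2data_cont _ _ _ (tau_C2 m f f1 f2 HC)) as [_ [_ Ct2]].
  destruct sf_cont as [Csf [Cs1 _]].
  assert (B1 := cont01_bounded _ Cs1).
  assert (U11 := unif_along_mult _ _ _ _ _ Hm B1 B1 unif_sig1 unif_sig1).
  assert (U111 := unif_along_mult _ _ _ _ _ Hm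
                    (cont01_bounded _ (cont01_mult _ _ Cs1 Cs1)) B1 U11 unif_sig1).
  assert (U := unif_along_scal _ _ _ (-1) (unif_along_mult _ _ _ _ _ Hm
    (cont01_bounded _ (cont01_comp _ _ Ct2 Csf sf_maps))
    (cont01_bounded _ (cont01_mult _ _ (cont01_mult _ _ Cs1 Cs1) Cs1))
    (unif_along_comp near _ _ _ _ Hm unif_tau2 unif_sigma Ct2 near_sigma_maps sf_maps)
    U111)).
  eapply unif_along_ext; [| |exact U]; intros; unfold sig2_of, inv_d2, sig1_of; ring.
Qed.

Section Coordinate.

Variables (j : nat) (hj : (j < m)%nat).

Lemma unif_u :
  unif_along near (fun p s => u_of (cd_g p) (cd_sigma p) s j) (fun s => u_of f sf s j).
Proof.
  destruct (f_coord_cont (S j) ltac:(lia)) as [C0 _].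
  exact (unif_along_comp near _ _ _ _ (nested_near_data m f f1 f2)
           (proj1 (unif_coords (S j) ltac:(lia))) unif_sigma C0 near_sigma_maps sf_maps).
Qed.

Lemma unif_u1 : unif_along near
  (fun p s => u1_of (cd_g p) (cd_g1 p) (cd_sigma p) s j) (fun s => u1_of f f1 sf s j).
Proof.
  destruct (f_coord_cont (S j) ltac:(lia)) as [_ [C1 _]].
  pose proof (nested_near_data m f f1 f2) as Hm.
  exact (unif_along_mult near _ _ _ _ Hm
    (cont01_bounded _ (cont01_comp _ _ C1 (proj1 sf_cont) sf_maps))
    (cont01_bounded _ (proj1 (proj2 sf_cont)))
    (unif_along_comp near _ _ _ _ Hm (proj1 (proj2 (unif_coords (S j) ltac:(lia))))
       unif_sigma C1 near_sigma_maps sf_maps)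
    unif_sig1).
Qed.

Lemma unif_u2 : unif_along near
  (fun p s => u2_of (cd_g p) (cd_g1 p) (cd_g2 p) (cd_sigma p) s j)
  (fun s => u2_of f f1 f2 sf s j).
Proof.
  destruct (f_coord_cont (S j) ltac:(lia)) as [_ [C1 C2]].
  destruct (unif_coords (S j) ltac:(lia)) as [_ [U1 U2]].
  destruct sf_cont as [Csf [Cs1 Cs2]].
  pose proof (nested_near_data m f f1 f2) as Hm.
  assert (Cg1 := cont01_comp _ _ C1 Csf sf_maps).
  assert (Cg2 := cont01_comp _ _ C2 Csf sf_maps).
  exact (unif_along_plus near _ _ _ _ Hm
    (unif_along_mult near _ _ _ _ Hm
       (cont01_bounded _ (cont01_mult _ _ Cg2 Cs1)) (cont01_bounded _ Cs1)
       (unif_along_mult near _ _ _ _ Hm (cont01_bounded _ Cg2) (cont01_bounded _ Cs1)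
          (unif_along_comp near _ _ _ _ Hm U2 unif_sigma C2 near_sigma_maps sf_maps)
          unif_sig1)
       unif_sig1)
    (unif_along_mult near _ _ _ _ Hm (cont01_bounded _ Cg1) (cont01_bounded _ Cs2)
       (unif_along_comp near _ _ _ _ Hm U1 unif_sigma C1 near_sigma_maps sf_maps)
       unif_sig2)).
Qed.

End Coordinate.

Lemma u_of_near e : 0 < e -> exists r, 0 < r /\ forall p, near r p ->
  c2near m (u_of f sf) (u_of (cd_g p) (cd_sigma p)) e.
Proof.
  intros he. pose proof (nested_near_data m f f1 f2) as Hm.
  destruct (nested_forall_lt near (fun j p => forall s, I01 s ->
      Rabs (u_of (cd_g p) (cd_sigma p) s j - u_of f sf s j) < e /\
      Rabs (u1_of (cd_g p) (cd_g1 p) (cd_sigma p) s j - u1_of f f1 sf s j) < e /\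
      Rabs (u2_of (cd_g p) (cd_g1 p) (cd_g2 p) (cd_sigma p) s j - u2_of f f1 f2 sf s j) < e)
      m Hm) as [r [hr Hr]].
  { intros j hj. exact (unif_along_and3 near _ _ _ _ _ _ Hm
                          (unif_u j hj) (unif_u1 j hj) (unif_u2 j hj) e he). }
  exists r; split; auto. intros p hp.
  exists (u1_of f f1 sf), (u2_of f f1 f2 sf),
    (u1_of (cd_g p) (cd_g1 p) (cd_sigma p)), (u2_of (cd_g p) (cd_g1 p) (cd_g2 p) (cd_sigma p)).
  split; [exact (normal_data_u_C2 m f f1 f2 sf Hf)|].
  split; [exact (normal_data_u_C2 m _ _ _ _ (proj1 hp))|].
  intros t i ht hi. destruct (Hr p hp i hi t ht) as [A [B C]].
  rewrite Rabs_minus_sym in A, B, C. auto.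
Qed.

End NormalFormContinuity.

(** * Openness of [p o Xi] *)

Lemma satImage_open m eta delta : 0 < delta < eta -> delta <= 1 / 2 ->
  forall V, XOpen m V -> (forall w, V w -> W5 m delta w) ->
  OmegaOpen m eta (satImage m eta V).
Proof.
  intros hdelta hdelta2 V [_ HV] HW. split; [intros f [hf _]; exact hf|].
  intros f [[_ [f1 [f2 [HCf _]]]] [[[a b] u] [hVw hrep]]].
  destruct (reparam_Xi_normal_form m f f1 f2 a b u HCf hrep
              (W5_lt m delta hdelta2 a b u (HW _ hVw))) as [sf [Hf [Fa [Fb Eu]]]].
  destruct (HV _ hVw) as [rV [hrV HrV]].
  destruct (u_of_near m f f1 f2 sf Hf rV hrV) as [rc [hrc Hrc]].
  destruct (C2data_cont _ _ _ (HCf O ltac:(lia))) as [_ [C1 _]].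
  destruct (cont01_pos_lb _ C1 (proj1 (proj2 Hf))) as [k [hk Hk]].
  (* [r <= k / 2] keeps the first coordinate of nearby curves increasing *)
  set (r := Rmin rc (Rmin rV (k / 2))).
  assert (Hr : 0 < r /\ r <= rc /\ r <= rV /\ r <= k / 2).
  { unfold r. pose proof (Rmin_l rc (Rmin rV (k / 2))); pose proof (Rmin_r rc (Rmin rV (k / 2))).
    pose proof (Rmin_l rV (k / 2)); pose proof (Rmin_r rV (k / 2)).
    split; [repeat apply Rmin_glb_lt; lra | lra]. }
  exists r. split; [lra|]. intros g hOg hnear.
  destruct (c2near_with _ f f1 f2 g r HCf hnear) as [g1 [g2 [HCg Hb]]].
  assert (hpg : forall t, I01 t -> 0 < g1 t O).
  { intros t ht. destruct (Hb t O ht ltac:(lia)) as [_ [A _]]. specialize (Hk t ht).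
    revert A; unfold Rabs; destruct Rcase_abs; intros; lra. }
  destruct (normal_data_exists m g g1 g2 HCg hpg) as [sg Hg].
  assert (Hgc : c2near m (u_of f sf) (u_of g sg) rV).
  { apply (Hrc (CurveData g g1 g2 sg)). split; [exact Hg|].
    intros t i ht hi. destruct (Hb t i ht hi) as [A [B C]]. simpl. repeat split; lra. }
  split; [exact hOg|].
  exists (g 0 O, g 1 O, u_of g sg). split; [|exact (normal_data_reparam m g g1 g2 sg Hg)].
  apply HrV.
  - exists (u1_of g g1 sg), (u2_of g g1 g2 sg). exact (normal_data_u_C2 m g g1 g2 sg Hg).
  - destruct (Hb 0 O I01_0 ltac:(lia)) as [A _]. destruct (Hb 1 O I01_1 ltac:(lia)) as [B _].
    rewrite Fa in A. rewrite Fb in B.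
    split; [lra | split; [lra|]]. exact (c2near_eq_l m u _ _ rV Eu Hgc).
Qed.

(* n = m + 1 *)
Theorem theorem2p9 (m : nat) (eta : R) (heta : 0 < eta) :
  exists (delta : R) (W5 : X -> Prop),
    0 < delta < eta /\
    (* W5 is an open subset of (-delta,delta) x (1-delta,1+delta) x C^2 *)
    (forall a b u, W5 (a, b, u) -> - delta < a < delta /\ 1 - delta < b < 1 + delta) /\
    XOpen m W5 /\
    W5 (0, 1, fun _ _ => 0) /\
    (* Xi(W5) subset Omega([0,1],G) *)
    (forall w, W5 w -> Omega m eta (Xi w)) /\
    (* hat W5 = p(Xi(W5)) is open in the quotient *)
    OmegaOpen m eta (satImage m eta W5) /\
    (* p o Xi : W5 -> hat W5 is a homeomorphism: *)
    (* injective *)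
    (forall w w', W5 w -> W5 w' -> reparam m (Xi w) (Xi w') -> Xeq m w w') /\
    (* continuous *)
    (forall S, OmegaOpen m eta S -> saturated m eta S ->
       XOpen m (fun w => W5 w /\ S (Xi w))) /\
    (* open *)
    (forall V, XOpen m V -> (forall w, V w -> W5 w) ->
       OmegaOpen m eta (satImage m eta V)).
Proof.
  set (delta := Rmin (eta / 2) (1 / 2)).
  assert (hdelta : 0 < delta < eta).
  { pose proof (Rmin_l (eta / 2) (1 / 2)). split; [apply Rmin_glb_lt | unfold delta]; lra. }
  assert (hdelta2 : delta <= 1 / 2) by apply Rmin_r.
  exists delta, (W5 m delta).
  split; [exact hdelta|].
  split; [intros a b u [ha [hb _]]; auto|].
  split; [apply W5_open|].
  split; [split; [lra | split; [lra | exists (fun _ _ => 0), (fun _ _ => 0);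
                                   intros i _; apply C2_const]]|].
  split; [exact (W5_Omega m eta delta hdelta hdelta2)|].
  split; [exact (satImage_open m eta delta hdelta hdelta2 _ (W5_open m delta) (fun w h => h))|].
  split; [intros [[a b] u] w' hw _; apply Xi_reparam_inj;
          apply Rlt_not_eq, (W5_lt m delta hdelta2 a b u hw)|].
  split; [intros S HS _; exact (W5_Xi_preimage_open m eta delta hdelta hdelta2 S HS)|].
  exact (satImage_open m eta delta hdelta hdelta2).
Qed.
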